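(* Let $X,Y\subseteq\mathbb{R}^n$, let $\xi\in\mathbb{R}\setminus\{0\}$ and let $A$ be an invertible $n\times n$ matrix. The cost $c(x,y)=|x|^2|y|^2+\xi\langle Ax,y\rangle$ satisfies the $2$-twist condition: for every $(x_0,y_0)\in X\times Y$ the set $L(x_0,y_0)=\{y\in Y:D_xc(x_0,y)=D_xc(x_0,y_0)\}$ has at most two elements.
   Context: $|\cdot|$ and $\langle\cdot,\cdot\rangle$ are the Euclidean norm and inner product on $\mathbb{R}^n$; $D_xc$ denotes the gradient of $c$ in the variable $x$. *)

From HB Require Import structures.
From mathcomp Require Import all_boot all_order all_algebra.
From mathcomp Require Import all_classical all_reals all_analysis.
Set Implicit Arguments. Unset Strict Implicit. Unset Printing Implicit Defensive.
Import Order.TTheory GRing.Theory Num.Theory.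
Import numFieldNormedType.Exports.
Local Open Scope classical_set_scope.
Local Open Scope ring_scope.

Definition dotv {R : realType} {n : nat} (u v : 'cV[R]_n) : R :=
  \sum_(i < n) u i 0 * v i 0.

Definition sqnorm {R : realType} {n : nat} (u : 'cV[R]_n) : R := dotv u u.

Definition cost {R : realType} {n : nat} (xi : R) (A : 'M[R]_n)
  (x y : 'cV[R]_n) : R :=
  sqnorm x * sqnorm y + xi * dotv (A *m x) y.

Definition gradx {R : realType} {n : nat} (c : 'cV[R]_n -> 'cV[R]_n -> R)
  (x y : 'cV[R]_n) : 'cV[R]_n :=
  \col_(i < n) ('D_(delta_mx i 0) (fun z => c z y) x).

Definition Lset {R : realType} {n : nat} (c : 'cV[R]_n -> 'cV[R]_n -> R)
  (Y : set 'cV[R]_n) (x0 y0 : 'cV[R]_n) : set 'cV[R]_n :=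
  [set y | Y y /\ gradx c x0 y = gradx c x0 y0].

Definition at_most_two {T : Type} (S : set T) : Prop :=
  exists a b : T, S `<=` [set a; b].

Definition two_twist {R : realType} {n : nat} (c : 'cV[R]_n -> 'cV[R]_n -> R)
  (X Y : set 'cV[R]_n) : Prop :=
  forall x0 y0, X x0 -> Y y0 -> at_most_two (Lset c Y x0 y0).

From HB Require Import structures.
From mathcomp Require Import all_boot all_order all_algebra.
From mathcomp Require Import all_classical all_reals all_analysis.
From mathcomp Require Import ring lra.
Import Order.TTheory GRing.Theory Num.Theory.
Import numFieldNormedType.Exports.
Local Open Scope classical_set_scope.
Local Open Scope ring_scope.

(* The cost is a polynomial in x, so its x-gradient can be read
   off from exact difference quotients:
       D_x c(x, y) = 2 |y|^2 x + xi A^T y.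
   If D_x c(x0, y) = D_x c(x0, y0) then, A^T being invertible,
       y = y0 + t w   with   t = |y0|^2 - |y|^2,   w = (2/xi) A^{-T} x0.
   Expanding |y0 + t w|^2 turns the definition of t into the quadratic equation
   t (1 + 2<y0,w> + t |w|^2) = 0, which has at most two roots when w != 0
   (and y = y0 when w = 0). *)

Lemma derive_affine_quotient (R : realType) (V W : normedModType R)
    (f : V -> W) (x v : V) (a b : W) :
  (forall h : R, h != 0 -> h^-1 *: (f (h *: v + x) - f x) = a + h *: b) ->
  'D_v f x = a.
Proof.
move=> quotE; rewrite /derive.
have affine_cvg : (fun h : R => a + h *: b) @ 0^' --> a.
  have cvg0 : (fun h : R => a + h *: b) @ (0 : R) --> a + 0 *: b.
    by apply: cvgD; [exact: cvg_cst | apply: cvgZ; [exact: cvg_id | exact: cvg_cst]].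
  rewrite scale0r addr0 in cvg0.
  exact: cvg_within_filter cvg0.
apply: cvg_lim => //; apply: cvg_trans affine_cvg.
apply: near_eq_cvg; rewrite near_withinE; near=> h => hn0.
by rewrite /= -quotE.
Unshelve. all: by end_near.
Qed.

Section EuclideanSpace.
Context {R : realType} {n : nat}.
Implicit Types u v w : 'cV[R]_n.

Lemma dotvE u v : dotv u v = (u^T *m v) 0 0.
Proof. by rewrite /dotv mxE; apply: eq_bigr => i _; rewrite mxE. Qed.

Lemma dotvC u v : dotv u v = dotv v u.
Proof. by apply: eq_bigr => i _; rewrite mulrC. Qed.

Lemma dotvDl u v w : dotv (u + v) w = dotv u w + dotv v w.
Proof. by rewrite /dotv -big_split; apply: eq_bigr => i _; rewrite mxE mulrDl. Qed.

Lemma dotvZl a u w : dotv (a *: u) w = a * dotv u w.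
Proof. by rewrite /dotv mulr_sumr; apply: eq_bigr => i _; rewrite mxE mulrA. Qed.

Lemma dotvDr u v w : dotv w (u + v) = dotv w u + dotv w v.
Proof. by rewrite dotvC dotvDl !(dotvC w). Qed.

Lemma dotvZr a u w : dotv w (a *: u) = a * dotv w u.
Proof. by rewrite dotvC dotvZl dotvC. Qed.

Lemma dotv_mulmx (M : 'M[R]_n) u v : dotv (M *m u) v = dotv u (M^T *m v).
Proof. by rewrite !dotvE trmx_mul mulmxA. Qed.

Lemma dotv_delta u i : dotv u (delta_mx i 0) = u i 0.
Proof. by rewrite dotvE -colE !mxE. Qed.

Lemma sqnorm_eq0 w : sqnorm w = 0 -> w = 0.
Proof.
move=> w0; apply/matrixP => i j; rewrite (ord1 j) mxE.
have sq_ge0 (k : 'I_n) : xpredT k -> 0 <= w k 0 * w k 0.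
  by move=> _; rewrite -expr2 sqr_ge0.
have /eqP := @psumr_eq0P _ _ xpredT (fun k => w k 0 * w k 0) sq_ge0 w0 i isT.
by rewrite mulf_eq0 orbb => /eqP.
Qed.

Lemma sqnorm_line y0 w t :
  sqnorm (y0 + t *: w) = sqnorm y0 + 2 * t * dotv y0 w + t ^+ 2 * sqnorm w.
Proof.
rewrite /sqnorm !(dotvDl, dotvDr, dotvZl, dotvZr) (dotvC w y0); ring.
Qed.

(* The x-gradient of the cost: D_x c(x, y) = 2|y|^2 x + xi A^T y.  Along e_i
   the difference quotient is exactly affine in the step, with constant term
   the i-th coordinate of this vector. *)
Lemma gradx_cost xi (A : 'M[R]_n) x y :
  gradx (cost xi A) x y = (2 * sqnorm y) *: x + xi *: (A^T *m y).
Proof.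
apply/matrixP => i j; rewrite (ord1 j) mxE [RHS]mxE [in RHS]mxE [X in _ = _ + X]mxE.
apply: (@derive_affine_quotient _ _ _ _ _ _ _
  (sqnorm (delta_mx i 0 : 'cV[R]_n) * sqnorm y)) => h hn0 /=.
rewrite /cost /sqnorm mulmxDr -scalemxAr !(dotvDl, dotvDr, dotvZl, dotvZr).
rewrite !dotv_mulmx !(dotvC _ (A^T *m y)) !dotv_delta (dotvC (delta_mx i 0) x).
by rewrite dotv_delta /GRing.scale /=; field.
Qed.

Lemma gradx_cost_eq_line xi (A : 'M[R]_n) x0 y0 y :
  xi != 0 -> A \in unitmx ->
  gradx (cost xi A) x0 y = gradx (cost xi A) x0 y0 ->
  y = y0 + (sqnorm y0 - sqnorm y) *: ((2 / xi) *: (invmx A^T *m x0)).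
Proof.
move=> xi0 Au; rewrite !gradx_cost => gradE.
have AtU : A^T \in unitmx by rewrite unitmx_tr.
have xiAtE : xi *: (A^T *m y) = xi *: (A^T *m y0) +
    (sqnorm y0 - sqnorm y) *: (2 *: x0).
  rewrite -[LHS](addrK ((2 * sqnorm y) *: x0)) (addrC (xi *: (A^T *m y))) gradE.
  rewrite scalerA mulrBl scalerBl !(mulrC _ 2) addrA; congr (_ - _).
  exact: addrC.
apply: (can_inj (mulKmx AtU)).
rewrite mulmxDr -!scalemxAr (mulKVmx AtU).
apply: (scalerI xi0); rewrite xiAtE scalerDr; congr (_ + _).
by rewrite !scalerA; congr (_ *: _); field.
Qed.

(* A point y lying on the line through y0 in direction w at the parameter
   |y0|^2 - |y|^2 solves t (1 + 2<y0,w> + t|w|^2) = 0 in t, so there are at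
   most two such points: y0 itself and one more when w != 0. *)
Lemma self_parametrized_line_at_most_two y0 w :
  at_most_two [set y | y = y0 + (sqnorm y0 - sqnorm y) *: w].
Proof.
have [->|w_neq0] := eqVneq w 0.
  by exists y0, y0 => y /= ->; left; rewrite scaler0 addr0.
pose d := dotv y0 w; pose q := sqnorm w.
have q_neq0 : q != 0 by apply: contra_neq w_neq0; exact: sqnorm_eq0.
exists y0, (y0 + (- (1 + 2 * d) / q) *: w) => y /= yE.
pose t := sqnorm y0 - sqnorm y; rewrite -/t in yE.
have t_root : t * (1 + 2 * d + t * q) = 0.
  have normE : sqnorm y = sqnorm y0 + 2 * t * d + t ^+ 2 * q.
    by rewrite -sqnorm_line -yE.
  have tE : t = - (2 * t * d + t ^+ 2 * q) by rewrite {1}/t normE; ring.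
  transitivity (t + (2 * t * d + t ^+ 2 * q)); first by ring.
  by rewrite {1}tE addNr.
have /orP[/eqP t0 | /eqP quad0] : (t == 0) || (1 + 2 * d + t * q == 0).
  by rewrite -mulf_eq0 t_root.
- by left; rewrite yE t0 scale0r addr0.
- right; rewrite [LHS]yE; congr (_ + _ *: _).
  by rewrite -[t](mulfK q_neq0); congr (_ / _); lra.
Qed.
End EuclideanSpace.

Theorem mainTheorem15 (R : realType) (n : nat) (X Y : set 'cV[R]_n)
  (xi : R) (A : 'M[R]_n) :
  xi != 0 -> A \in unitmx -> two_twist (cost xi A) X Y.
Proof.
move=> xi0 Au x0 y0 _ _.
have [a [b onLine]] := self_parametrized_line_at_most_two y0
  ((2 / xi) *: (invmx A^T *m x0)).
exists a, b => y [_ gradE]; apply: onLine.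
exact: gradx_cost_eq_line.
Qed.
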